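(* Let $R$ be a semiring and $f, g: N \to M$ two homomorphisms of left $R$-semimodules. Define $m \sim_{(f,g)} m'$ if and only if there exist $k \ge 1$, elements $m_1, \ldots, m_k \in M$ and $n_1, \ldots, n_k, n'_1, \ldots, n'_k \in N$ such that $m = m_1 + f(n_1) + g(n'_1)$, $m_i + f(n'_i) + g(n_i) = m_{i+1} + f(n_{i+1}) + g(n'_{i+1})$ for $1 \le i \le k-1$, and $m_k + f(n'_k) + g(n_k) = m'$. Then $\sim_{(f,g)}$ is a congruence relation on $M$.
   Context: A semiring $R$ is a commutative monoid $(R,+,0)$ with an associative multiplication with unit $1$, distributive on both sides, and with $0r = 0 = r0$. A left $R$-semimodule is a commutative monoid $(M,+,0)$ with a map $R\times M \to M$ satisfying $(rr')m = r(r'm)$, $(r+r')m = rm + r'm$, $r(m+m') = rm + rm'$, $1m = m$, $0m = 0 = r0$. A homomorphism of left $R$-semimodules is an additive map $f$ with $f(rm) = rf(m)$. A congruence relation on $M$ is an equivalence relation $\sim$ such that $m \sim m'$ implies $m + n \sim m' + n$ and $rm \sim rm'$ for all $n \in M$, $r \in R$. *)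

From HB Require Import structures.
From mathcomp Require Import all_boot all_order all_algebra.
Set Implicit Arguments. Unset Strict Implicit. Unset Printing Implicit Defensive.
Import GRing.Theory.
Local Open Scope ring_scope.

(* Semiring = pzSemiRingType (0 = 1 allowed); left R-semimodule = lSemiModType R;
   semimodule homomorphism = {linear N -> M} (additive and scalable). *)

Definition congruence (R : pzSemiRingType) (M : lSemiModType R) (rel : M -> M -> Prop) : Prop :=
  [/\ (forall m, rel m m),
      (forall m m', rel m m' -> rel m' m),
      (forall m m' m'', rel m m' -> rel m' m'' -> rel m m''),
      (forall m m' n, rel m m' -> rel (m + n) (m' + n))
    & (forall (r : R) m m', rel m m' -> rel (r *: m) (r *: m'))].

(* m ~_(f,g) m' ; the paper's indices 1..k are shifted to 0..k-1. *)
Definition fg_rel (R : pzSemiRingType) (N M : lSemiModType R)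
  (f g : {linear N -> M}) (m m' : M) : Prop :=
  exists k : nat, (0 < k)%N /\
  exists (ms : nat -> M) (ns ns' : nat -> N),
    [/\ m = ms 0%N + f (ns 0%N) + g (ns' 0%N),
        (forall i : nat, (i.+1 < k)%N ->
           ms i + f (ns' i) + g (ns i) = ms i.+1 + f (ns i.+1) + g (ns' i.+1))
      & ms k.-1 + f (ns' k.-1) + g (ns k.-1) = m'].

From mathcomp Require Import all_boot all_order all_algebra.
From mathcomp Require Import zify.
Import GRing.Theory.
Local Open Scope ring_scope.

(* A chain witnessing m ~ m' read backwards, with the roles of n_i and n'_i
   exchanged, witnesses m' ~ m; two chains glue at their common endpoint; and
   adding n to every m_i, or scaling every m_i, n_i, n'_i by r, transports a
   chain since f and g are additive and R-linear. *)

Section FgRel.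

Variables (R : pzSemiRingType) (N M : lSemiModType R) (f g : {linear N -> M}).

Lemma fg_rel_refl (m : M) : fg_rel f g m m.
Proof.
exists 1%N; split => //.
exists (fun=> m), (fun=> 0), (fun=> 0).
by split => //=; rewrite !raddf0 !addr0.
Qed.

Lemma fg_rel_sym (m m' : M) : fg_rel f g m m' -> fg_rel f g m' m.
Proof.
move=> [k [k_gt0 [ms [ns [ns' [first_eq step_eq last_eq]]]]]].
exists k; split => //.
exists (fun i => ms (k.-1 - i)%N), (fun i => ns' (k.-1 - i)%N),
       (fun i => ns (k.-1 - i)%N); split => /=.
- by rewrite subn0 last_eq.
- move=> i lt_i1k.
  have -> : (k.-1 - i = (k.-1 - i.+1).+1)%N by lia.
  by rewrite step_eq //; lia.
- by rewrite subnn first_eq.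
Qed.

Lemma fg_rel_trans (m m' m'' : M) :
  fg_rel f g m m' -> fg_rel f g m' m'' -> fg_rel f g m m''.
Proof.
move=> [k1 [k1_gt0 [ms1 [ns1 [ns1' [first1 step1 last1]]]]]]
       [k2 [k2_gt0 [ms2 [ns2 [ns2' [first2 step2 last2]]]]]].
pose glue T (u v : nat -> T) i := if (i < k1)%N then u i else v (i - k1)%N.
exists (k1 + k2)%N; split; first lia.
exists (glue _ ms1 ms2), (glue _ ns1 ns2), (glue _ ns1' ns2'); rewrite /glue.
split => /=.
- by rewrite k1_gt0.
- move=> i lt_i1k.
  have [lt_i1k1 | le_k1i1] := ltnP i.+1 k1; first by rewrite ltnW // step1.
  have [lt_ik1 | le_k1i] := ltnP i k1.
    have -> : i = k1.-1 by lia.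
    have -> : (k1.-1.+1 - k1 = 0)%N by lia.
    by rewrite last1 first2.
  have -> : (i.+1 - k1 = (i - k1).+1)%N by lia.
  by apply: step2; lia.
- have -> : ((k1 + k2).-1 < k1)%N = false by lia.
  by have -> : ((k1 + k2).-1 - k1 = k2.-1)%N by lia.
Qed.

Lemma fg_rel_addr (m m' n : M) :
  fg_rel f g m m' -> fg_rel f g (m + n) (m' + n).
Proof.
move=> [k [k_gt0 [ms [ns [ns' [first_eq step_eq last_eq]]]]]].
have shift (x y z : M) : x + n + y + z = x + y + z + n.
  by rewrite (addrAC x) (addrAC (x + y)).
exists k; split => //.
exists (fun i => ms i + n), ns, ns'; split => /=.
- by rewrite first_eq shift.
- by move=> i lt_i1k; rewrite !shift step_eq.
- by rewrite -last_eq shift.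
Qed.

Lemma fg_rel_scale (r : R) (m m' : M) :
  fg_rel f g m m' -> fg_rel f g (r *: m) (r *: m').
Proof.
move=> [k [k_gt0 [ms [ns [ns' [first_eq step_eq last_eq]]]]]].
exists k; split => //.
exists (fun i => r *: ms i), (fun i => r *: ns i), (fun i => r *: ns' i).
split => /=.
- by rewrite first_eq !linearZ !scalerDr.
- by move=> i lt_i1k; rewrite !linearZ -!scalerDr step_eq.
- by rewrite -last_eq !linearZ !scalerDr.
Qed.

End FgRel.

Theorem lemma2p12 (R : pzSemiRingType) (N M : lSemiModType R)
  (f g : {linear N -> M}) :
  congruence (fg_rel f g).
Proof.
split.
- exact: fg_rel_refl.
- exact: fg_rel_sym.
- exact: fg_rel_trans.
- exact: fg_rel_addr.
- exact: fg_rel_scale.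
Qed.
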